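(* Let $\lambda_1\ge\lambda_2\ge\dots\ge\lambda_r>0$ satisfy $\lambda_i\le\chi\lambda_{i+1}$ for all $i\in[r-1]$, for some $\chi>1$. Let $\eta>0$ and let $\gamma_0,\gamma_1,\dots>0$ be such that $\eta\gamma_j\lambda_1<1$ for all $j$. For $t\ge0$ and $i\in[r]$ define $P_i(t)=\prod_{j=0}^{t-1}(1-\eta\gamma_j\lambda_i)$. Fix $a_1\in(0,1)$ and set $a_2=e^{(a_1-1)/\chi}$. (a) For every $t$ and every $i\in[r-1]$: if $P_i(t)<a_1$, then $P_{i+1}(t)<a_2$. (b) Consequently, if $P_1(t)<a_2$ and $P_r(t)\ge a_1$, then there exists $i\in[r]$ with $a_1\le P_i(t)\le a_2$. In particular, (b) holds for all $t$ in the interval $[t_1,t_2)$, where $t_1$ is the first iteration with $P_1(t)<a_2$ and $t_2$ is the first iteration with $P_r(t)<a_1$.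
   Context: In the paper this is applied with $\gamma_j\lambda_i=\lambda_i(\tilde M(j))=v_i^\top\tilde M(j)v_i$. Here $\tilde M(j)=\gamma_jX^\top X$ with $\gamma_j>0$, and the $\lambda_i$ are the nonzero eigenvalues of $X^\top X$. *)

From Stdlib Require Import Reals.
Open Scope R_scope.

Fixpoint prodR (f : nat -> R) (t : nat) : R :=
  match t with
  | O => 1
  | S t' => prodR f t' * f t'
  end.

Definition Pfun (eta : R) (gamma : nat -> R) (lambda : nat -> R) (i t : nat) : R :=
  prodR (fun j => 1 - eta * gamma j * lambda i) t.

(* If [P_i(t) < a1] then [sum_j eta gamma_j lambda_i > 1 - a1], because a product
   of factors [1 - x_j] in [0, 1] is at least [1 - sum_j x_j].  Since
   [lambda_(i+1) >= lambda_i / chi], the exponent sum for [lambda_(i+1)] exceeds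
   [(1 - a1) / chi], and [1 - y <= exp (- y)] gives [P_(i+1)(t) < a2].  Part (b)
   follows by walking down from [i = r]: the first index with [P_i(t) >= a1]
   whose predecessor drops below [a1] lands in [a1, a2].  For [t] in [[t1, t2)],
   [P_1(t) <= P_1(t1) < a2] since [P_1] is nonincreasing in [t]. *)
From Stdlib Require Import Reals Lra Lia.
Open Scope R_scope.

Fixpoint sumR (f : nat -> R) (t : nat) : R :=
  match t with
  | O => 0
  | S t' => sumR f t' + f t'
  end.

Lemma sumR_le (x y : nat -> R) (t : nat) :
  (forall j, x j <= y j) -> sumR x t <= sumR y t.
Proof. intros Hxy; induction t as [|t IH]; simpl; [lra|]. specialize (Hxy t); lra. Qed.

Lemma sumR_mull (c : R) (x : nat -> R) (t : nat) :
  sumR (fun j => c * x j) t = c * sumR x t.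
Proof. induction t as [|t IH]; simpl; [ring|]. rewrite IH; ring. Qed.

Section UnitProducts.

Variable x : nat -> R.
Hypothesis x_unit : forall j, 0 <= x j <= 1.

Let Q (t : nat) : R := prodR (fun j => 1 - x j) t.

Lemma prodR_1m_bounds (t : nat) : 0 <= Q t <= 1.
Proof.
  unfold Q; induction t as [|t IH]; simpl; [lra|].
  specialize (x_unit t); split; [apply Rmult_le_pos|]; nra.
Qed.

Lemma prodR_1m_ge_1_sub_sum (t : nat) : 1 - sumR x t <= Q t.
Proof.
  induction t as [|t IH]; unfold Q in *; simpl; [lra|].
  pose proof (prodR_1m_bounds t) as Hb; unfold Q in Hb.
  specialize (x_unit t); nra.
Qed.

Lemma prodR_1m_le_exp_sum (t : nat) : Q t <= exp (- sumR x t).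
Proof.
  induction t as [|t IH]; unfold Q in *; simpl.
  - rewrite Ropp_0, exp_0; lra.
  - pose proof (prodR_1m_bounds t) as Hb; unfold Q in Hb.
    replace (- (sumR x t + x t)) with (- sumR x t + - x t) by ring.
    rewrite exp_plus.
    assert (1 - x t <= exp (- x t)) by (pose proof (exp_ineq1_le (- x t)); lra).
    specialize (x_unit t); apply Rmult_le_compat; lra.
Qed.

Lemma prodR_1m_nonincreasing (t t' : nat) : (t <= t')%nat -> Q t' <= Q t.
Proof.
  induction 1 as [|t' _ IH]; [lra|].
  pose proof (prodR_1m_bounds t') as Hb.
  unfold Q in *; simpl; specialize (x_unit t'); nra.
Qed.

End UnitProducts.

Lemma prodR_1m_lt_exp_of_scaled (x y : nat -> R) (c a : R) (t : nat) :
  (forall j, 0 <= x j <= 1) -> (forall j, 0 <= y j <= 1) -> 0 < c ->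
  (forall j, x j <= c * y j) ->
  prodR (fun j => 1 - x j) t < a ->
  prodR (fun j => 1 - y j) t < exp ((a - 1) / c).
Proof.
  intros Hx Hy Hc Hxy Ha.
  assert (Hsx : 1 - a < sumR x t)
    by (pose proof (prodR_1m_ge_1_sub_sum x Hx t); lra).
  assert (Hsxy : sumR x t <= c * sumR y t)
    by (rewrite <- sumR_mull; apply sumR_le; exact Hxy).
  apply (Rle_lt_trans _ _ _ (prodR_1m_le_exp_sum y Hy t)), exp_increasing.
  apply (Rmult_lt_reg_l c); [exact Hc|].
  replace (c * ((a - 1) / c)) with (a - 1) by (field; lra).
  lra.
Qed.

Lemma exists_between_of_jump (f : nat -> R) (r : nat) (a b : R) :
  (1 <= r)%nat -> f 1%nat < b -> a <= f r ->
  (forall k, (1 <= k)%nat -> (k < r)%nat -> f k < a -> f (S k) < b) ->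
  exists i, (1 <= i <= r)%nat /\ a <= f i <= b.
Proof.
  intros Hr H1 Har Hjump.
  enough (Hk : forall k, (1 <= k <= r)%nat -> a <= f k ->
             exists i, (1 <= i <= r)%nat /\ a <= f i <= b) by (apply (Hk r); [lia|exact Har]).
  induction k as [|k IH]; intros Hk Hak; [lia|].
  destruct (Nat.eq_dec k 0) as [->|Hk0]; [exists 1%nat; split; [lia|lra]|].
  destruct (Rlt_le_dec (f k) a) as [Hlt|Hge].
  - exists (S k); split; [lia|].
    pose proof (Hjump k ltac:(lia) ltac:(lia) Hlt); lra.
  - apply IH; [lia|exact Hge].
Qed.

Section Spectrum.

Variables (r : nat) (lambda : nat -> R).
Hypothesis lambda_step : forall i, (1 <= i)%nat -> (i < r)%nat -> lambda (S i) <= lambda i.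

Lemma lambda_antitone (i k : nat) :
  (1 <= i)%nat -> (i <= k <= r)%nat -> lambda k <= lambda i.
Proof.
  intros Hi [Hik Hkr]; induction Hik as [|k Hik IH]; [lra|].
  pose proof (lambda_step k ltac:(lia) ltac:(lia)).
  pose proof (IH ltac:(lia)); lra.
Qed.

Lemma lambda_pos (i : nat) : 0 < lambda r -> (1 <= i <= r)%nat -> 0 < lambda i.
Proof. intros Hr Hi; pose proof (lambda_antitone i r ltac:(lia) ltac:(lia)); lra. Qed.

End Spectrum.

Theorem mainTheorem4 (r : nat) (lambda : nat -> R) (chi eta a1 : R)
  (gamma : nat -> R)
  (hr : (1 <= r)%nat)
  (hmono : forall i : nat, (1 <= i)%nat -> (i < r)%nat -> lambda (S i) <= lambda i)
  (hpos : 0 < lambda r)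
  (hchi : 1 < chi)
  (hratio : forall i : nat, (1 <= i)%nat -> (i < r)%nat -> lambda i <= chi * lambda (S i))
  (heta : 0 < eta)
  (hgamma : forall j : nat, 0 < gamma j)
  (hstep : forall j : nat, eta * gamma j * lambda 1%nat < 1)
  (ha1 : 0 < a1 < 1) :
  let a2 := exp ((a1 - 1) / chi) in
  let P := Pfun eta gamma lambda in
  (* (a) *)
  (forall (t i : nat), (1 <= i)%nat -> (i < r)%nat ->
      P i t < a1 -> P (S i) t < a2) /\
  (* (b) *)
  (forall t : nat, P 1%nat t < a2 -> a1 <= P r t ->
      exists i : nat, (1 <= i <= r)%nat /\ a1 <= P i t <= a2) /\
  (* in particular: for all t in [t1, t2) *)
  (forall t1 t2 : nat,
      (P 1%nat t1 < a2 /\ forall s : nat, (s < t1)%nat -> a2 <= P 1%nat s) ->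
      (P r t2 < a1 /\ forall s : nat, (s < t2)%nat -> a1 <= P r s) ->
      forall t : nat, (t1 <= t)%nat -> (t < t2)%nat ->
        exists i : nat, (1 <= i <= r)%nat /\ a1 <= P i t <= a2).
Proof.
  intros a2 P.
  assert (Hunit : forall i, (1 <= i <= r)%nat ->
            forall j, 0 <= eta * gamma j * lambda i <= 1).
  { intros i Hi j.
    pose proof (lambda_antitone r lambda hmono 1 i ltac:(lia) ltac:(lia)).
    pose proof (lambda_pos r lambda hmono i hpos Hi).
    pose proof (hstep j).
    assert (0 < eta * gamma j) by (pose proof (hgamma j); nra).
    split; nra. }
  assert (HA : forall t i, (1 <= i)%nat -> (i < r)%nat ->
             P i t < a1 -> P (S i) t < a2).
  { intros t i Hi Hir.
    apply prodR_1m_lt_exp_of_scaled; [apply Hunit; lia|apply Hunit; lia|lra|].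
    intro j; pose proof (hratio i Hi Hir).
    assert (0 < eta * gamma j) by (pose proof (hgamma j); nra).
    nra. }
  assert (HB : forall t, P 1%nat t < a2 -> a1 <= P r t ->
             exists i, (1 <= i <= r)%nat /\ a1 <= P i t <= a2)
    by (intros t H1 Hr; apply (exists_between_of_jump (fun i => P i t)); auto).
  split; [exact HA|]; split; [exact HB|].
  intros t1 t2 [H1 _] [_ H2] t Ht1 Ht2.
  apply HB; [|exact (H2 t Ht2)].
  eapply Rle_lt_trans; [|exact H1].
  apply prodR_1m_nonincreasing; [apply Hunit; lia|exact Ht1].
Qed.
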